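(* Let $m\ge 2$ and let $\alpha_1,\dots,\alpha_m\in\mathbb{R}$ be algebraically independent over $\mathbb{Q}$; let $K=\mathbb{Q}(\alpha_1,\dots,\alpha_m)$ and $K^+=\{x\in K: x>0\}$. Then for every integer $n\ge 2$ there exist infinitely many different ways to write $K^+$ as a union of $n$ pairwise disjoint nonempty subsets, each closed under addition and multiplication. *)

From mathcomp Require Import all_boot all_algebra.
From mathcomp Require Import reals.
From mathcomp Require Import mpoly.
Set Implicit Arguments. Unset Strict Implicit. Unset Printing Implicit Defensive.
Import GRing.Theory Num.Theory.
Local Open Scope ring_scope.

Definition alg_indep_Q (R : realType) (m : nat) (alpha : 'I_m -> R) : Prop :=
  forall p : {mpoly rat[m]}, p != 0 -> (map_mpoly (@ratr R) p).@[alpha] != 0.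

Definition in_K (R : realType) (m : nat) (alpha : 'I_m -> R) (x : R) : Prop :=
  exists p q : {mpoly rat[m]},
    (map_mpoly (@ratr R) q).@[alpha] != 0 /\
    x = (map_mpoly (@ratr R) p).@[alpha] / (map_mpoly (@ratr R) q).@[alpha].

Definition in_Kplus (R : realType) (m : nat) (alpha : 'I_m -> R) (x : R) : Prop :=
  in_K alpha x /\ 0 < x.

Definition semiring_partition (R : realType) (S : R -> Prop) (n : nat)
    (A : 'I_n -> R -> Prop) : Prop :=
  [/\ forall x, S x <-> exists i, A i x,
      forall i j x, i != j -> A i x -> A j x -> False,
      forall i, exists x, A i x,
      forall i x y, A i x -> A i y -> A i (x + y)
    & forall i x y, A i x -> A i y -> A i (x * y)].

(* Two labelled families describe the same (unordered) decomposition iff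
   they have the same collection of blocks (as sets). *)
Definition same_blocks (R : Type) (n : nat) (A B : 'I_n -> R -> Prop) : Prop :=
  (forall i, exists j, forall x, A i x <-> B j x) /\
  (forall j, exists i, forall x, B j x <-> A i x).

(* Write x in K^+ as f(alpha) for a rational function f, and let u(x), v(x) be
   the values at alpha of X_i (df/dX_i) / f for two of the variables; algebraic
   independence makes them well defined. The map x |-> (u, v) sends products to
   sums and x + y to (x (u, v)(x) + y (u, v)(y)) / (x + y), so the preimage in K^+
   of a plane cone closed under positive combinations is closed under + and *.
   Cutting the plane into n such cones thus cuts K^+ into n subsemirings, all
   nonempty since the squared monomials alpha_i^(2a) alpha_j^(2b) reach every
   (2a, 2b). Precomposing with the shears (u, v) |-> (u, v - k u) gives one
   decomposition for each k; they differ because the block containing 1 contains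
   alpha_i^2 alpha_j^(2a) exactly when a < k. *)

From HB Require Import structures.
From mathcomp Require Import all_boot all_algebra.
From mathcomp Require Import reals.
From mathcomp Require Import mpoly.
From mathcomp Require Import order ring lra zify.
Set Implicit Arguments. Unset Strict Implicit.
Import Order.TTheory GRing.Theory Num.Theory.
Local Open Scope ring_scope.

Section Cones.
Variable R : realFieldType.
Implicit Types (C : R -> R -> bool) (t U V : R).

Definition cone C := forall l mu a b c d, 0 < l -> 0 < mu ->
  C a b -> C c d -> C (l * a + mu * c) (l * b + mu * d).

Lemma cone_andb C1 C2 : cone C1 -> cone C2 -> cone (fun U V => C1 U V && C2 U V).
Proof. by move=> c1 c2 l mu a b c d l0 mu0 /andP[? ?] /andP[? ?]; rewrite c1 ?c2. Qed.

Lemma cone_implyb (P : bool) C : cone C -> cone (fun U V => P ==> C U V).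
Proof. by case: P => //= cC; exact: cC. Qed.

Lemma cone_ltr t : cone (fun U V => t * V < U).
Proof. move=> l mu a b c d l0 mu0 ab cd; nra. Qed.

Lemma cone_ler t : cone (fun U V => U <= t * V).
Proof. move=> l mu a b c d l0 mu0 ab cd; nra. Qed.

Lemma cone_shear t C : cone C -> cone (fun U V => C U (V - t * U)).
Proof.
move=> cC l mu a b c d l0 mu0 /(cC l mu _ _ c (d - t * c) l0 mu0) H /H.
by congr C; ring.
Qed.

Definition lexpos U V := (0 < V) || (V == 0) && (0 < U).

Lemma lexpos_ge0 U V : lexpos U V -> 0 <= V.
Proof. by case/orP=> [/ltW //|/andP[/eqP-> _]]. Qed.

Lemma lexposE U V : 0 < U -> lexpos U V = (0 <= V).
Proof. by move=> U0; rewrite /lexpos U0 andbT le_eqVlt eq_sym orbC. Qed.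

Lemma cone_lexpos : cone lexpos.
Proof.
move=> l mu a b c d l0 mu0 /orP[b0|/andP[/eqP-> a0]] /orP[d0|/andP[/eqP-> c0]];
  apply/orP; [left; nra|left; nra|left; nra|right].
by rewrite !mulr0 addr0 eqxx /=; nra.
Qed.

Lemma cone_lexnonpos : cone (fun U V => ~~ lexpos U V).
Proof.
have E U V : ~~ lexpos U V = (V < 0) || (V == 0) && (U <= 0).
  by rewrite /lexpos negb_or negb_and -!leNgt le_eqVlt; case: ltrgtP.
move=> l mu a b c d l0 mu0; rewrite !E.
move=> /orP[b0|/andP[/eqP-> a0]] /orP[d0|/andP[/eqP-> c0]];
  apply/orP; [left; nra|left; nra|left; nra|right].
by rewrite !mulr0 addr0 eqxx /=; nra.
Qed.

(* Sector 0 is the complement of [lexpos]; the rays through the points (j, 1),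
   1 <= j <= N, cut [lexpos] into the sectors 1, ..., N + 1. *)
Definition sector (N i : nat) U V :=
  if i is i'.+1 then
    [&& lexpos U V, (0 < i')%N ==> (i'%:R * V < U) & (i' < N)%N ==> (U <= i'.+1%:R * V)]
  else ~~ lexpos U V.

Lemma cone_sector N i : cone (sector N i).
Proof.
case: i => [|i]; first exact: cone_lexnonpos.
apply: cone_andb; first exact: cone_lexpos.
by apply: cone_andb; apply: cone_implyb; [apply: cone_ltr | apply: cone_ler].
Qed.

Lemma sector_lt_disjoint N i j U V : (i < j < N.+2)%N ->
  sector N i U V -> ~~ sector N j U V.
Proof.
case: j => [|j]; first by rewrite ltn0.
case: i => [_ /negbTE /= -> //|i ijN].
have [iN j0] : (i < N)%N /\ (0 < j)%N by lia.
move=> /and3P[/lexpos_ge0 V0 _ /implyP/(_ iN) le_iV].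
apply/negP => /and3P[_ /implyP/(_ j0) lt_jV _].
have : i.+1%:R * V <= j%:R * V by rewrite ler_wpM2r // ler_nat; lia.
by rewrite leNgt (lt_le_trans lt_jV le_iV).
Qed.

Lemma sector_disjoint N i j U V : (i < N.+2)%N -> (j < N.+2)%N -> i != j ->
  sector N i U V -> ~~ sector N j U V.
Proof.
move=> iN jN; case: ltngtP => // [ij|ji] _ Si.
- by apply: sector_lt_disjoint Si; rewrite ij.
- by apply: contraL Si; apply: sector_lt_disjoint; rewrite ji.
Qed.

Lemma sector_witness N i t : 0 < t -> (i <= N)%N -> sector N i.+1 (i.+1%:R * t) t.
Proof.
move=> t0 iN /=; rewrite /lexpos t0 lexx ltr_pM2r // ltr_nat ltnSn.
by rewrite !implybT.
Qed.

Lemma sector_cover N U V : exists2 i, (i < N.+2)%N & sector N i U V.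
Proof.
case lexposUV: (lexpos U V); last by exists 0%N; rewrite //= lexposUV.
pose P j := (N <= j)%N || (U <= j.+1%:R * V).
have PN : P N by rewrite /P leqnn.
have [i Pi min_i] := ex_minnP (ex_intro P N PN).
have iN : (i <= N)%N by apply: min_i; rewrite /P leqnn.
exists i.+1 => //=; rewrite lexposUV /=; apply/andP; split; apply/implyP => hi.
- have /negP : ~ P i.-1 by move=> /min_i; lia.
  rewrite /P prednK // negb_or -ltNge => /andP[_ //].
- by move: Pi; rewrite /P leqNgt hi.
Qed.
End Cones.

Section LogDerivative.
Variables (F : comNzRingType) (m : nat) (R : fieldType) (ev : {rmorphism {mpoly F[m]} -> R}).
Hypothesis ev_inj : injective ev.
Implicit Types (p q : {mpoly F[m]}) (x y d : R).

Lemma ev_eq0 p : (ev p == 0) = (p == 0).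
Proof. by rewrite -(rmorph0 ev) (inj_eq ev_inj). Qed.

Lemma evX_neq0 i : ev 'X_i != 0.
Proof.
rewrite ev_eq0; apply/eqP => /(congr1 (mcoeff (U_(i))%MM)).
by rewrite mcoeffXU mcoeff0 eqxx => /eqP; rewrite oner_eq0.
Qed.

Definition logder j p := ev (p^`M(j)) / ev p.

Lemma logderM j p q : ev p != 0 -> ev q != 0 ->
  logder j (p * q) = logder j p + logder j q.
Proof.
move=> p0 q0; rewrite /logder mderivM rmorphD !rmorphM addf_div //.
by rewrite [ev (q^`M(j)) * _]mulrC.
Qed.

Lemma logderD j p q : ev p != 0 -> ev q != 0 -> ev (p + q) != 0 ->
  logder j (p + q) = ev p / ev (p + q) * logder j p + ev q / ev (p + q) * logder j q.
Proof.
move=> p0 q0; rewrite /logder mderivD !rmorphD => pq0.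
by field; rewrite p0 q0 pq0.
Qed.

Lemma logder1 j : logder j 1 = 0.
Proof. by rewrite /logder -[1]/(1%:MP) mderivC rmorph0 mul0r. Qed.

Lemma logderX i j : logder j 'X_i = (i == j)%:R / ev 'X_i.
Proof.
rewrite /logder mderivX mnm1E; congr (_ / _).
case: eqP => [->|_]; last by rewrite scale0r rmorph0.
have -> : (U_(j) - U_(j) = 0)%MM by apply/mnmP => k; rewrite mnmBE mnm0E subnn.
by rewrite mpolyX0 scale1r rmorph1.
Qed.

(* [d] is the image under [ev] of the Euler logarithmic derivative
   X_j (df/dX_j) / f of a fraction f = p / q with image [x]; as [ev] is
   injective, it depends on [x] only ([elogder_uniq]). *)
Definition elogder j x d := exists p q,
  [/\ ev q != 0, x = ev p / ev q & d = ev 'X_j * (logder j p - logder j q)].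

Lemma elogder_num j x d : x != 0 -> elogder j x d -> exists p q,
  [/\ ev p != 0, ev q != 0, x = ev p / ev q & d = ev 'X_j * (logder j p - logder j q)].
Proof.
move=> x0 [p [q [q0 ex ed]]]; exists p, q; split => //.
by move: x0; rewrite ex mulf_eq0 negb_or => /andP[].
Qed.

Lemma elogder_uniq j x d1 d2 : x != 0 -> elogder j x d1 -> elogder j x d2 -> d1 = d2.
Proof.
move=> x0 /(elogder_num x0) [p1 [q1 [p10 q10 ex1 ->]]].
move=> /(elogder_num x0) [p2 [q2 [p20 q20 ex2 ->]]].
have cross : p1 * q2 = p2 * q1.
  by apply: ev_inj; rewrite !rmorphM; apply/eqP; rewrite -eqr_div // -ex1 -ex2.
have := congr1 (logder j) cross; rewrite !logderM // => E.
by congr (_ * _); apply/eqP; rewrite subr_eq addrAC -E addrK.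
Qed.

Lemma elogder_mul j x y d1 d2 : x != 0 -> y != 0 ->
  elogder j x d1 -> elogder j y d2 -> elogder j (x * y) (d1 + d2).
Proof.
move=> x0 y0 /(elogder_num x0) [p1 [q1 [p10 q10 -> ->]]].
move=> /(elogder_num y0) [p2 [q2 [p20 q20 -> ->]]].
exists (p1 * p2), (q1 * q2); split.
- by rewrite rmorphM mulf_neq0.
- by rewrite !rmorphM mulf_div.
- by rewrite !logderM // -mulrDr opprD addrACA.
Qed.

Lemma elogder_add j x y d1 d2 : x != 0 -> y != 0 -> x + y != 0 ->
  elogder j x d1 -> elogder j y d2 ->
  elogder j (x + y) (x / (x + y) * d1 + y / (x + y) * d2).
Proof.
move=> x0 y0 xy0 /(elogder_num x0) [p1 [q1 [p10 q10 ex ->]]].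
move=> /(elogder_num y0) [p2 [q2 [p20 q20 ey ->]]].
have sum : x + y = ev (p1 * q2 + p2 * q1) / ev (q1 * q2).
  by rewrite ex ey addf_div // rmorphD !rmorphM.
have s0 : ev (p1 * q2 + p2 * q1) != 0.
  by move: xy0; rewrite sum mulf_eq0 negb_or => /andP[].
have q0 : ev (q1 * q2) != 0 by rewrite rmorphM mulf_neq0.
exists (p1 * q2 + p2 * q1), (q1 * q2); split => //.
rewrite logderD ?rmorphM ?mulf_neq0 // !logderM // ex ey.
move: s0; rewrite rmorphD !rmorphM => s0.
by field; rewrite s0 q10 q20.
Qed.

Lemma elogder1 j : elogder j 1 0.
Proof. by exists 1, 1; rewrite rmorph1 oner_neq0 divr1 logder1 subrr mulr0. Qed.

Lemma elogder_evX i j : elogder j (ev 'X_i) (i == j)%:R.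
Proof.
exists 'X_i, 1; rewrite rmorph1 oner_neq0 divr1 logder1 subr0 logderX.
case: eqP => [->|_].
- by rewrite mulr1n mul1r mulfV ?evX_neq0.
- by rewrite mulr0n mul0r mulr0.
Qed.

Lemma elogderXn j x d n : x != 0 -> elogder j x d -> elogder j (x ^+ n) (n%:R * d).
Proof.
move=> x0 xd; elim: n => [|n IH]; first by rewrite expr0 mul0r; apply: elogder1.
by rewrite exprS -add1n natrD mulrDl mul1r; apply: elogder_mul; rewrite ?expf_neq0.
Qed.
End LogDerivative.

Section Blocks.
Variables (F : comNzRingType) (m : nat) (R : realType) (ev : {rmorphism {mpoly F[m]} -> R}).
Hypothesis ev_inj : injective ev.
Variables i0 i1 : 'I_m.
Hypothesis i01 : i0 != i1.
Implicit Types (C : R -> R -> bool) (x y u v : R).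

Definition in_frac x := exists p q, ev q != 0 /\ x = ev p / ev q.

Definition logcone C x :=
  0 < x /\ exists u v, [/\ elogder ev i0 x u, elogder ev i1 x v & C u v].

Lemma logconeE C x u v : 0 < x -> elogder ev i0 x u -> elogder ev i1 x v ->
  logcone C x <-> C u v.
Proof.
move=> x0 xu xv; split=> [[_ [u' [v' [xu' xv' Cuv]]]]|Cuv]; last by split; last exists u, v.
have nx0 := lt0r_neq0 x0.
by rewrite (elogder_uniq ev_inj nx0 xu xu') (elogder_uniq ev_inj nx0 xv xv').
Qed.

Lemma logcone_frac C x : logcone C x -> in_frac x /\ 0 < x.
Proof. by case=> x0 [u [v [[p [q [q0 ex _]]] _ _]]]; split => //; exists p, q. Qed.

Lemma logcone_add C x y : cone C -> logcone C x -> logcone C y -> logcone C (x + y).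
Proof.
move=> cC [x0 [u1 [v1 [xu1 xv1 C1]]]] [y0 [u2 [v2 [yu2 yv2 C2]]]].
have xy0 : 0 < x + y by rewrite addr_gt0.
split => //.
exists (x / (x + y) * u1 + y / (x + y) * u2), (x / (x + y) * v1 + y / (x + y) * v2).
have [nx ny nxy] := And3 (lt0r_neq0 x0) (lt0r_neq0 y0) (lt0r_neq0 xy0).
split; [exact: elogder_add xu1 yu2 | exact: elogder_add xv1 yv2 |].
by apply: (cC _ _ _ _ _ _ _ _ C1 C2); rewrite divr_gt0.
Qed.

Lemma logcone_mul C x y : cone C -> logcone C x -> logcone C y -> logcone C (x * y).
Proof.
move=> cC [x0 [u1 [v1 [xu1 xv1 C1]]]] [y0 [u2 [v2 [yu2 yv2 C2]]]].
split; first by rewrite mulr_gt0.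
have [nx ny] := conj (lt0r_neq0 x0) (lt0r_neq0 y0).
exists (u1 + u2), (v1 + v2).
split; [exact: elogder_mul xu1 yu2 | exact: elogder_mul xv1 yv2 |].
by have := cC 1 1 _ _ _ _ ltr01 ltr01 C1 C2; rewrite !mul1r.
Qed.

Definition block N k i := logcone (fun U V => sector N i U (V - k%:R * U)).

Lemma cone_block N k i : cone (fun U V : R => sector N i U (V - k%:R * U)).
Proof. exact/cone_shear/cone_sector. Qed.

Lemma block_cover N k x : in_frac x -> 0 < x -> exists2 i, (i < N.+2)%N & block N k i x.
Proof.
move=> [p [q [q0 ex]]] x0.
set u := ev 'X_i0 * (logder ev i0 p - logder ev i0 q).
set v := ev 'X_i1 * (logder ev i1 p - logder ev i1 q).
have xu : elogder ev i0 x u by exists p, q.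
have xv : elogder ev i1 x v by exists p, q.
have [i iN Si] := sector_cover N u (v - k%:R * u).
by exists i => //; apply/(logconeE _ x0 xu xv).
Qed.

Lemma block_disjoint N k i j x : (i < N.+2)%N -> (j < N.+2)%N -> i != j ->
  block N k i x -> ~ block N k j x.
Proof.
move=> iN jN ij [x0 [u [v [xu xv Si]]]] /(logconeE _ x0 xu xv).
by apply/negP; apply: sector_disjoint Si.
Qed.

(* Squared, as the [ev 'X_i] may be negative. *)
Definition sqmono a b := (ev 'X_i0 ^+ a * ev 'X_i1 ^+ b) ^+ 2.

Lemma sqmono_gt0 a b : 0 < sqmono a b.
Proof. by rewrite exprn_even_gt0 //= mulf_neq0 // expf_neq0 // evX_neq0. Qed.

Lemma elogder_sqmono j a b :
  elogder ev j (sqmono a b) (2 * (a%:R * (i0 == j)%:R + b%:R * (i1 == j)%:R)).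
Proof.
have X0 i : ev 'X_i != 0 := evX_neq0 ev_inj i.
apply: elogderXn; first by rewrite mulf_neq0 // expf_neq0.
by apply: elogder_mul; rewrite ?expf_neq0 //; apply: elogderXn => //; apply: elogder_evX.
Qed.

Lemma block_sqmono N k i a b :
  block N k i (sqmono a b) <-> sector N i (2 * a%:R : R) (2 * b%:R - k%:R * (2 * a%:R)).
Proof.
have := elogder_sqmono i0 a b; rewrite eqxx eq_sym (negbTE i01) mulr1 mulr0 addr0 => xu.
have := elogder_sqmono i1 a b; rewrite (negbTE i01) eqxx mulr0 mulr1 add0r => xv.
exact: logconeE (sqmono_gt0 a b) xu xv.
Qed.

Lemma block_nonempty N k i : (i < N.+2)%N -> exists x, block N k i x.
Proof.
case: i => [_|i iN].
  by exists (sqmono 0 0); apply/block_sqmono; rewrite !mulr0 subr0 /= /lexpos ltxx eqxx.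
exists (sqmono i.+1 (1 + k * i.+1)); apply/block_sqmono.
have -> : 2 * (1 + k * i.+1)%:R - k%:R * (2 * i.+1%:R) = 2 :> R.
  by rewrite natrD natrM; ring.
by rewrite mulrC; apply: sector_witness.
Qed.

Lemma block0_sqmono1 N k a : block N k 0 (sqmono 1 a) <-> (a < k)%N.
Proof.
apply: iff_trans (block_sqmono _ _ _ _ _) _; rewrite /= mulr1 lexposE //.
have -> : 2 * a%:R - k%:R * 2 = 2 * (a%:R - k%:R) :> R by ring.
by rewrite pmulr_rge0 // subr_ge0 ler_nat -ltnNge.
Qed.

Lemma block_partition N k :
  semiring_partition (fun x => in_frac x /\ 0 < x) (fun i : 'I_N.+2 => block N k i).
Proof.
split.
- move=> x; split => [[xK x0] | [i /logcone_frac //]].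
  by have [i iN Bi] := block_cover N k xK x0; exists (Ordinal iN).
- by move=> i j x ij; apply: block_disjoint (ltn_ord i) (ltn_ord j) ij.
- by move=> i; apply: block_nonempty (ltn_ord i).
- by move=> i x y; apply/logcone_add/cone_block.
- by move=> i x y; apply/logcone_mul/cone_block.
Qed.

Lemma blocks_not_same N k l : k <> l ->
  ~ same_blocks (fun i : 'I_N.+2 => block N k i) (fun i : 'I_N.+2 => block N l i).
Proof.
wlog lt_kl : k l / (k < l)%N.
  move=> wlog_kl; case: (ltngtP k l) => [|lt_lk _ [kl lk]|-> //]; first exact: wlog_kl.
  by apply: (wlog_kl l k lt_lk); [lia | split].
move=> _ [same_kl _]; have [j Bj] := same_kl ord0.
have block0_1 k' : block N k' 0 (sqmono 0 0).
  by apply/block_sqmono; rewrite !mulr0 subr0 /= /lexpos ltxx eqxx.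
have j0 : nat_of_ord j = 0%N.
  have [//|j_neq0] := eqVneq (nat_of_ord j) 0%N; exfalso.
  exact: block_disjoint (ltn_ord j) (ltn0Sn N.+1) j_neq0 ((Bj _).1 (block0_1 k)) (block0_1 l).
have : block N l j (sqmono 1 k) by rewrite j0; apply/block0_sqmono1.
by move=> /(Bj _).2 /block0_sqmono1; rewrite ltnn.
Qed.
End Blocks.

Definition evalQ (R : realType) m (alpha : 'I_m -> R) (p : {mpoly rat[m]}) : R :=
  (map_mpoly (@ratr R) p).@[alpha].

HB.instance Definition _ (R : realType) m (alpha : 'I_m -> R) :=
  GRing.RMorphism.copy (evalQ alpha) (meval alpha \o map_mpoly ratr).

Lemma evalQ_inj (R : realType) m (alpha : 'I_m -> R) :
  alg_indep_Q alpha -> injective (evalQ alpha).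
Proof.
move=> indep p q epq.
have epq0 : evalQ alpha (p - q) = 0 by rewrite rmorphB /= epq subrr.
apply/eqP; rewrite -subr_eq0; apply/negPn/negP => /indep.
by rewrite -/(evalQ alpha (p - q)) epq0 eqxx.
Qed.

Theorem proposition2p3 (R : realType) (m : nat) (alpha : 'I_m -> R) :
  (2 <= m)%N -> alg_indep_Q alpha ->
  forall n : nat, (2 <= n)%N ->
  exists F : nat -> 'I_n -> R -> Prop,
    (forall k, semiring_partition (in_Kplus alpha) (F k)) /\
    (forall k l, k <> l -> ~ same_blocks (F k) (F l)).
Proof.
move=> m2 indep [|[|N]] // _.
pose i0 : 'I_m := Ordinal (ltnW m2); pose i1 : 'I_m := Ordinal m2.
have i01 : i0 != i1 by [].
exists (fun k (i : 'I_N.+2) => block (evalQ alpha) i0 i1 N k i); split => k.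
- exact (block_partition (evalQ_inj indep) i01 N k).
- by move=> l; apply: (blocks_not_same (evalQ_inj indep) i01).
Qed.
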